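(* Let $k>0$, $(a,d)\in(0,1)\times(0,\infty)$, let $g$ satisfy (Hg), and let $(c,\Phi)$ with $c\in\mathbb R$, $\Phi\in C^1(\mathbb R)$ solve $$-c\Phi'(\xi)=d\big(k\Phi(\xi+1)-(k+1)\Phi(\xi)+\Phi(\xi-1)\big)+g(\Phi(\xi);a)\ (\xi\in\mathbb R),\quad \lim_{\xi\to-\infty}\Phi(\xi)=0,\ \lim_{\xi\to+\infty}\Phi(\xi)=1.$$ Suppose there exist $\bar c\in\mathbb R$ and a bounded $\Psi\in C^1(\mathbb R)$ such that (i) $\sup_{\xi}\Psi(\xi)>0$, (ii) $\Psi(\xi)\le\Phi(\xi)$ for all $\xi$, (iii) $\mathcal I_{a,d,k}[\bar c,\Psi](\xi)\le0$ for all $\xi$. Then $c\le\bar c$. Likewise, if (i') $\inf_\xi\Psi(\xi)<1$, (ii') $\Psi(\xi)\ge\Phi(\xi)$ for all $\xi$, (iii') $\mathcal I_{a,d,k}[\bar c,\Psi](\xi)\ge0$ for all $\xi$, then $c\ge\bar c$.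
   Context: For $c\in\mathbb R$ and $\Phi\in C^1(\mathbb R)$, $\mathcal I_{a,d,k}[c,\Phi](\xi):=-c\Phi'(\xi)-d\big(\Phi(\xi-1)-(k+1)\Phi(\xi)+k\Phi(\xi+1)\big)-g(\Phi(\xi);a)$. A function $g:\mathbb R\times[0,1]\to\mathbb R$, $(u,a)\mapsto g(u;a)$, satisfies (Hg) if it is $C^1$ and for every $a\in(0,1)$: $g(0;a)=g(a;a)=g(1;a)=0$, $g'(0;a)<0$, $g'(1;a)<0$, $g'(a;a)>0$ (where $g'=\partial_u g$), $g(v;a)>0$ for $v\in(-\infty,0)\cup(a,1)$ and $g(v;a)<0$ for $v\in(0,a)\cup(1,\infty)$. *)

From Stdlib Require Import Reals.
From Coquelicot Require Import Coquelicot.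
Open Scope R_scope.

Definition CR1 (f : R -> R) : Prop :=
  (forall x, ex_derive f x) /\ (forall x, continuous (Derive f) x).

Definition jcont_strip (f : R -> R -> R) : Prop :=
  forall u a, 0 <= a <= 1 -> forall eps, 0 < eps -> exists delta, 0 < delta /\
    forall v b, 0 <= b <= 1 -> Rabs (v - u) < delta -> Rabs (b - a) < delta ->
      Rabs (f v b - f u a) < eps.

Definition derive_within01 (h : R -> R) (a l : R) : Prop :=
  forall eps, 0 < eps -> exists delta, 0 < delta /\
    forall b, 0 <= b <= 1 -> b <> a -> Rabs (b - a) < delta ->
      Rabs ((h b - h a) / (b - a) - l) < eps.

Definition CR1_strip (g : R -> R -> R) : Prop :=
  exists gu ga : R -> R -> R,
    (forall u a, 0 <= a <= 1 -> is_derive (fun v => g v a) u (gu u a)) /\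
    (forall u a, 0 <= a <= 1 -> derive_within01 (fun b => g u b) a (ga u a)) /\
    jcont_strip gu /\ jcont_strip ga.

Definition dg (g : R -> R -> R) (u a : R) : R := Derive (fun v => g v a) u.

Definition Hg (g : R -> R -> R) : Prop :=
  CR1_strip g /\
  forall a, 0 < a < 1 ->
    g 0 a = 0 /\ g a a = 0 /\ g 1 a = 0 /\
    dg g 0 a < 0 /\ dg g 1 a < 0 /\ dg g a a > 0 /\
    (forall v, (v < 0 \/ (a < v /\ v < 1)) -> g v a > 0) /\
    (forall v, ((0 < v /\ v < a) \/ 1 < v) -> g v a < 0).

Definition Iop (g : R -> R -> R) (a d k c : R) (Phi : R -> R) (xi : R) : R :=
  - (c * Derive Phi xi)
  - d * (Phi (xi - 1) - (k + 1) * Phi xi + k * Phi (xi + 1))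
  - g (Phi xi) a.

Definition bddR (f : R -> R) : Prop := exists M, forall x, Rabs (f x) <= M.

(* If c > cbar, slide the wave to the right, Phi(. - s), and push it up by the
   small exponentially growing amount eps e^(M s).  At s = 0 it lies strictly
   above Psi; for s = T large it no longer does, because Phi(-inf) = 0 < sup Psi.
   At the first touching time s0 and point y0, the slopes of the two profiles
   agree, the growth in s forces Phi' >= M eps e^(M s0), the lattice terms have
   the favourable sign, and g costs at most L eps e^(M s0).  Subtracting the
   equation of Phi from the inequality of Psi then leaves
   (c - cbar) Phi' <= L eps e^(M s0), impossible once M (c - cbar) = L + 1.
   The statement for supersolutions above Phi follows by the reflection
   u(x) |-> -u(-x), which exchanges the two lattice weights and flips the speed. *)
From Stdlib Require Import Reals Lra Classical.
From Coquelicot Require Import Coquelicot.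
Open Scope R_scope.

Definition lattice_residual (k1 k2 : R) (f : R -> R) (c : R) (U : R -> R) (x : R) : R :=
  c * Derive U x + k1 * (U (x + 1) - U x) + k2 * (U (x - 1) - U x) + f (U x).

Definition locally_lipschitz (f : R -> R) : Prop :=
  forall r, exists L, 0 <= L /\ forall x y, Rabs x <= r -> Rabs y <= r ->
    Rabs (f x - f y) <= L * Rabs (x - y).

Definition reflect (U : R -> R) (x : R) : R := - U (- x).

Lemma exp_le_compat (x y : R) : x <= y -> exp x <= exp y.
Proof.
  intros [Hlt | ->]; [left; apply exp_increasing, Hlt | right; reflexivity].
Qed.

Lemma derive_nonpos_of_left_min (h : R -> R) (x l r : R) :
  is_derive h x l -> 0 < r -> (forall y, x - r < y < x -> h x <= h y) -> l <= 0.
Proof.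
  intros Hd Hr Hmin. apply is_derive_Reals in Hd.
  destruct (Rle_or_lt l 0) as [|Hl]; [assumption|exfalso].
  destruct (Hd l Hl) as [delta Hdelta].
  assert (Hdr : 0 < Rmin delta r) by (apply Rmin_glb_lt; [apply cond_pos|lra]).
  assert (Hd1 := Rmin_l delta r). assert (Hd2 := Rmin_r delta r).
  set (t := - (Rmin delta r / 2)).
  assert (Hq : (h (x + t) - h x) / t <= 0).
  { assert (h x <= h (x + t)) by (apply Hmin; unfold t; lra).
    assert (/ t < 0) by (apply Rinv_lt_0_compat; unfold t; lra).
    unfold Rdiv. nra. }
  specialize (Hdelta t ltac:(unfold t; lra) ltac:(unfold t; rewrite Rabs_left; lra)).
  rewrite Rabs_left1 in Hdelta by lra. lra.
Qed.

Lemma derive_eq0_of_min (h : R -> R) (x l : R) :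
  is_derive h x l -> (forall y, h x <= h y) -> l = 0.
Proof.
  intros Hd Hmin. apply is_derive_Reals in Hd.
  rewrite <- (derive_pt_eq_0 h x l (exist _ l Hd) Hd).
  apply (deriv_minimum h (x - 1) (x + 1)); [lra|lra|]. intros y _ _. apply Hmin.
Qed.

Lemma locally_lipschitz_of_derive (f f' : R -> R) :
  (forall x, is_derive f x (f' x)) -> (forall x, continuous f' x) -> locally_lipschitz f.
Proof.
  intros Hd Hc r.
  assert (Hr := Rabs_pos r).
  destruct (continuity_ab_maj (fun x => Rabs (f' x)) (- (3 * Rabs r)) (3 * Rabs r))
    as [xm [Hxm _]]; [lra| |].
  { intros x _. apply (continuity_pt_comp f' Rabs);
      [apply continuity_pt_filterlim, Hc | apply Rcontinuity_abs]. }
  exists (Rabs (f' xm)). split; [apply Rabs_pos|].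
  intros x y Hx Hy. apply (bounded_variation f f'). intros t Ht. split; [apply Hd|].
  apply Hxm. revert Hx Hy Ht. unfold Rabs. repeat destruct Rcase_abs; lra.
Qed.

Lemma locally_lipschitz_CR1_strip (g : R -> R -> R) (a : R) :
  CR1_strip g -> 0 <= a <= 1 -> locally_lipschitz (fun u => g u a).
Proof.
  intros [gu [ga [Hgu [_ [Hcont _]]]]] Ha.
  apply (locally_lipschitz_of_derive _ (fun u => gu u a)); [intros x; apply Hgu, Ha|].
  intros x. apply continuity_pt_filterlim. intros eps Heps.
  destruct (Hcont x a Ha eps Heps) as [delta [Hdelta Hclose]].
  exists delta. split; [exact Hdelta|]. intros y [_ Hy].
  apply Hclose; [exact Ha | exact Hy | rewrite Rminus_eq_0, Rabs_R0; exact Hdelta].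
Qed.

Lemma locally_lipschitz_reflect (f : R -> R) :
  locally_lipschitz f -> locally_lipschitz (reflect f).
Proof.
  intros Hf r. destruct (Hf r) as [L [HL Hlip]]. exists L. split; [exact HL|].
  intros x y Hx Hy. unfold reflect.
  replace (- f (- x) - - f (- y)) with (- (f (- x) - f (- y))) by ring.
  replace (x - y) with (- (- x - - y)) by ring. rewrite !Rabs_Ropp.
  apply Hlip; rewrite Rabs_Ropp; assumption.
Qed.

Lemma is_lim_m_infty_below (U : R -> R) (lm v x : R) :
  is_lim U m_infty lm -> lm < v -> exists T, 0 <= T /\ U (x - T) < v.
Proof.
  intros Hlim Hv. apply is_lim_spec in Hlim.
  destruct (Hlim (mkposreal (v - lm) ltac:(lra))) as [Z HZ].
  assert (HT := Rmax_r 0 (x - Z + 1)).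
  exists (Rmax 0 (x - Z + 1)). split; [apply Rmax_l|].
  assert (Hclose := HZ (x - Rmax 0 (x - Z + 1)) ltac:(lra)).
  simpl in Hclose. apply Rabs_def2 in Hclose. lra.
Qed.

Lemma translates_close_at_infinity (U : R -> R) (lm lp T e : R) :
  is_lim U m_infty lm -> is_lim U p_infty lp -> 0 < e ->
  exists X, forall s y, 0 <= s <= T -> X < Rabs y -> Rabs (U (y - s) - U y) < e.
Proof.
  intros Hm Hp He. apply is_lim_spec in Hm, Hp.
  destruct (Hm (mkposreal (e / 2) ltac:(lra))) as [Z1 HZ1].
  destruct (Hp (mkposreal (e / 2) ltac:(lra))) as [Z2 HZ2]. simpl in HZ1, HZ2.
  exists (Rabs Z1 + Rabs Z2 + Rabs T). intros s y Hs Hy.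
  assert (HZ1a := Rle_abs (- Z1)). rewrite Rabs_Ropp in HZ1a.
  assert (HZ2a := Rle_abs Z2). assert (HTa := Rle_abs T). assert (HZ2p := Rabs_pos Z2).
  assert (HZ1p := Rabs_pos Z1).
  destruct (Rle_or_lt 0 y) as [Hy0|Hy0].
  - rewrite (Rabs_right y) in Hy by lra.
    assert (A1 := HZ2 (y - s) ltac:(lra)). assert (A2 := HZ2 y ltac:(lra)).
    apply Rabs_def2 in A1, A2. apply Rabs_def1; lra.
  - rewrite (Rabs_left y) in Hy by lra.
    assert (A1 := HZ1 (y - s) ltac:(lra)). assert (A2 := HZ1 y ltac:(lra)).
    apply Rabs_def2 in A1, A2. apply Rabs_def1; lra.
Qed.

Section FirstTouching.

Variables (G : R -> R -> R) (T : R).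
Hypothesis G_pos_at0 : forall y, 0 < G 0 y.
Hypothesis G_pos_far : exists X, forall s y, 0 <= s <= T -> X < Rabs y -> 0 < G s y.
Hypothesis G_lipschitz_in_s : forall X, exists B, 0 <= B /\
  forall s1 s2 y, 0 <= s1 <= T -> 0 <= s2 <= T -> Rabs y <= X ->
    Rabs (G s1 y - G s2 y) <= B * Rabs (s1 - s2).
Hypothesis G_continuous_in_y : forall s y, continuity_pt (G s) y.

Let positive (s : R) : Prop := forall y, 0 < G s y.

(* Far out G is positive by hypothesis; on the compact [-X, X] its minimum is,
   and the Lipschitz bound keeps it positive a little longer. *)
Lemma positive_persists (s1 : R) : 0 <= s1 <= T -> positive s1 ->
  exists eta, 0 < eta /\ forall s, s1 <= s <= s1 + eta -> s <= T -> positive s.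
Proof.
  intros Hs1 Hpos. destruct G_pos_far as [X HX].
  assert (HXa := Rle_abs X). assert (HXp := Rabs_pos X).
  destruct (continuity_ab_min (G s1) (- Rabs X) (Rabs X)) as [ym [Hym _]];
    [lra | intros; apply G_continuous_in_y |].
  destruct (G_lipschitz_in_s (Rabs X)) as [B [HB Hlip]].
  assert (Hm : 0 < G s1 ym) by apply Hpos.
  set (eta := G s1 ym / (2 * (B + 1))).
  assert (Heta : 0 < eta) by (apply Rdiv_lt_0_compat; lra).
  assert (HBeta : (B + 1) * eta = G s1 ym / 2) by (unfold eta; field; lra).
  exists eta. split; [exact Heta|]. intros s Hs HsT y.
  destruct (Rlt_or_le (Rabs X) (Rabs y)) as [Hy|Hy]; [apply HX; lra|].
  assert (Hl := Hlip s s1 y ltac:(lra) Hs1 Hy).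
  rewrite (Rabs_right (s - s1)) in Hl by lra. apply Rabs_le_between in Hl.
  assert (G s1 ym <= G s1 y) by (apply Hym, Rabs_le_between, Hy).
  nra.
Qed.

Lemma nonneg_of_positive_before (s0 : R) : 0 < s0 <= T ->
  (forall s, 0 <= s < s0 -> positive s) -> forall y, 0 <= G s0 y.
Proof.
  intros Hs0 Hbefore y.
  destruct (Rle_or_lt 0 (G s0 y)) as [|Hneg]; [assumption|exfalso].
  destruct (G_lipschitz_in_s (Rabs y)) as [B [HB Hlip]].
  assert (Hh1 := Rmin_l s0 (- G s0 y / (2 * (B + 1)))).
  assert (Hh2 := Rmin_r s0 (- G s0 y / (2 * (B + 1)))).
  set (h := Rmin s0 (- G s0 y / (2 * (B + 1)))) in *.
  assert (Hh : 0 < h) by (apply Rmin_glb_lt; [lra | apply Rdiv_lt_0_compat; lra]).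
  assert (HBh : (B + 1) * h <= - G s0 y / 2).
  { apply (Rmult_le_compat_l (B + 1)) in Hh2; [|lra].
    replace ((B + 1) * (- G s0 y / (2 * (B + 1)))) with (- G s0 y / 2) in Hh2
      by (field; lra).
    exact Hh2. }
  assert (Hl := Hlip (s0 - h) s0 y ltac:(lra) ltac:(lra) (Rle_refl _)).
  replace (s0 - h - s0) with (- h) in Hl by ring.
  rewrite Rabs_Ropp, (Rabs_right h) in Hl by lra. apply Rabs_le_between in Hl.
  assert (Hp := Hbefore (s0 - h) ltac:(lra) y).
  nra.
Qed.

Lemma first_touching : (exists s y, 0 <= s <= T /\ G s y <= 0) ->
  exists s0 y0, 0 < s0 <= T /\ G s0 y0 = 0 /\ (forall y, 0 <= G s0 y) /\
    (forall s, 0 <= s < s0 -> positive s).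
Proof.
  intros [s1 [y1 [Hs1 Hy1]]].
  set (E := fun t => 0 <= t <= T /\ forall s, 0 <= s <= t -> positive s).
  assert (HE0 : E 0).
  { split; [lra|]. intros s Hs. replace s with 0 by lra. exact G_pos_at0. }
  destruct (completeness E) as [s0 [Hub Hlub]];
    [exists T; intros t [Ht _]; lra | exists 0; exact HE0 |].
  assert (Hs0 : 0 <= s0 <= T).
  { split; [apply Hub, HE0 | apply Hlub; intros t [Ht _]; lra]. }
  assert (Hbefore : forall s, 0 <= s < s0 -> positive s).
  { intros s Hs. apply NNPP. intros Hns.
    assert (s0 <= s); [|lra].
    apply Hlub. intros t [_ Ht]. apply Rnot_lt_le. intros Hst. apply Hns, Ht. lra. }
  assert (Hnot : ~ positive s0).
  { intros Hpos. destruct (positive_persists s0 Hs0 Hpos) as [eta [Heta Hafter]].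
    assert (Ht1 := Rmin_l (s0 + eta) T). assert (Ht2 := Rmin_r (s0 + eta) T).
    set (t := Rmin (s0 + eta) T) in *.
    assert (HEt : E t).
    { split; [split; [apply Rmin_glb|]; lra|].
      intros s Hs. destruct (Rlt_or_le s s0); [apply Hbefore; lra | apply Hafter; lra]. }
    assert (Hts := Hub t HEt).
    assert (HsT : s0 = T).
    { destruct (Rlt_or_le s0 T) as [HlT|]; [exfalso|lra].
      assert (t > s0) by (apply Rmin_Rgt_r; lra). lra. }
    apply (Rle_not_lt _ _ Hy1).
    destruct (Rlt_or_le s1 s0); [apply Hbefore; lra|].
    replace s1 with s0 by lra. apply Hpos. }
  destruct (not_all_ex_not _ _ Hnot) as [y0 Hy0]. apply Rnot_lt_le in Hy0.
  assert (Hs0pos : 0 < s0).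
  { destruct (Req_dec s0 0) as [Hz|]; [|lra].
    rewrite Hz in Hy0. specialize (G_pos_at0 y0). lra. }
  assert (Hnn := nonneg_of_positive_before s0 (conj Hs0pos (proj2 Hs0)) Hbefore).
  exists s0, y0. repeat split; try lra; [|exact Hnn|exact Hbefore].
  apply Rle_antisym; [exact Hy0 | apply Hnn].
Qed.

End FirstTouching.

Lemma lattice_residual_touching (k1 k2 : R) (f U V : R -> R) (c cbar x y E : R) :
  0 <= k1 -> 0 <= k2 -> Derive U x = Derive V y -> V y - U x = E ->
  V (y + 1) - U (x + 1) <= E -> V (y - 1) - U (x - 1) <= E ->
  lattice_residual k1 k2 f cbar V y - lattice_residual k1 k2 f c U x
    <= (cbar - c) * Derive U x + (f (V y) - f (U x)).
Proof.
  intros Hk1 Hk2 Hslope HE Hright Hleft. unfold lattice_residual. rewrite Hslope.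
  assert (0 <= k1 * (E - (V (y + 1) - U (x + 1)))) by (apply Rmult_le_pos; lra).
  assert (0 <= k2 * (E - (V (y - 1) - U (x - 1)))) by (apply Rmult_le_pos; lra).
  nra.
Qed.

Section SpeedComparison.

Variables (k1 k2 : R) (f U V : R -> R) (c cbar lm lp : R).
Hypotheses (Hk1 : 0 <= k1) (Hk2 : 0 <= k2) (Hf : locally_lipschitz f).
Hypotheses (HU : CR1 U) (HV : forall x, ex_derive V x) (HVbdd : bddR V).
Hypotheses (HUm : is_lim U m_infty lm) (HUp : is_lim U p_infty lp).
Hypothesis HUsuper : forall x, lattice_residual k1 k2 f c U x <= 0.
Hypothesis HVsub : forall x, 0 <= lattice_residual k1 k2 f cbar V x.
Hypothesis HVU : forall x, V x <= U x.

Definition shifted_gap (eps M s y : R) : R := U (y - s) - V y + eps * exp (M * s).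

Lemma shifted_gap_pos_at0 (eps M : R) : 0 < eps -> forall y, 0 < shifted_gap eps M 0 y.
Proof.
  intros Heps y. unfold shifted_gap.
  rewrite Rminus_0_r, Rmult_0_r, exp_0. specialize (HVU y). lra.
Qed.

Lemma shifted_gap_pos_far (eps M T : R) : 0 < eps -> 0 <= M ->
  exists X, forall s y, 0 <= s <= T -> X < Rabs y -> 0 < shifted_gap eps M s y.
Proof.
  intros Heps HM.
  destruct (translates_close_at_infinity U lm lp T eps HUm HUp Heps) as [X HX].
  exists X. intros s y Hs Hy. unfold shifted_gap.
  assert (Hclose := HX s y Hs Hy). apply Rabs_def2 in Hclose.
  assert (Hexp : exp 0 <= exp (M * s)) by (apply exp_le_compat; nra).
  rewrite exp_0 in Hexp. specialize (HVU y). nra.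
Qed.

Lemma shifted_gap_lipschitz (eps M T X : R) : exists B, 0 <= B /\
  forall s1 s2 y, 0 <= s1 <= T -> 0 <= s2 <= T -> Rabs y <= X ->
    Rabs (shifted_gap eps M s1 y - shifted_gap eps M s2 y) <= B * Rabs (s1 - s2).
Proof.
  destruct HU as [HUd HUc].
  destruct (locally_lipschitz_of_derive U (Derive U)
              (fun x => Derive_correct _ _ (HUd x)) HUc (X + T)) as [B1 [HB1 HUlip]].
  assert (Hexp : locally_lipschitz (fun s => eps * exp (M * s))).
  { apply (locally_lipschitz_of_derive _ (fun s => eps * (M * exp (M * s)))).
    - intros s. auto_derive; [exact I | ring].
    - intros s. apply (ex_derive_continuous (K := R_AbsRing) (V := R_NormedModule)).
      auto_derive. exact I. }
  destruct (Hexp T) as [B2 [HB2 Hexplip]].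
  exists (B1 + B2). split; [lra|]. intros s1 s2 y Hs1 Hs2 Hy. unfold shifted_gap.
  replace (U (y - s1) - V y + eps * exp (M * s1) - (U (y - s2) - V y + eps * exp (M * s2)))
    with ((U (y - s1) - U (y - s2)) + (eps * exp (M * s1) - eps * exp (M * s2))) by ring.
  eapply Rle_trans; [apply Rabs_triang|]. rewrite Rmult_plus_distr_r.
  apply Rplus_le_compat.
  - replace (s1 - s2) with (- ((y - s1) - (y - s2))) by ring. rewrite Rabs_Ropp.
    apply HUlip; revert Hy; unfold Rabs; repeat destruct Rcase_abs; lra.
  - apply Hexplip; unfold Rabs; repeat destruct Rcase_abs; lra.
Qed.

Lemma shifted_gap_continuous (eps M s y : R) : continuity_pt (shifted_gap eps M s) y.
Proof.
  apply continuity_pt_filterlim, (ex_derive_continuous (K := R_AbsRing) (V := R_NormedModule)).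
  unfold shifted_gap. auto_derive. repeat split; [apply HU | apply HV].
Qed.

Lemma shifted_gap_touching_slopes (eps M s0 y0 : R) : 0 < s0 ->
  shifted_gap eps M s0 y0 = 0 -> (forall y, 0 <= shifted_gap eps M s0 y) ->
  (forall s, 0 <= s < s0 -> forall y, 0 < shifted_gap eps M s y) ->
  Derive U (y0 - s0) = Derive V y0 /\ M * (eps * exp (M * s0)) <= Derive U (y0 - s0).
Proof.
  intros Hs0 Htouch Habove Hbefore. split.
  - assert (Hd : is_derive (shifted_gap eps M s0) y0 (Derive U (y0 - s0) - Derive V y0)).
    { unfold shifted_gap. auto_derive; [repeat split; [apply HU | apply HV]|].
      change (fun x : R => U x) with U. change (fun x : R => V x) with V.
      unfold Rminus. ring. }
    apply Rminus_diag_uniq, (derive_eq0_of_min _ _ _ Hd). rewrite Htouch. exact Habove.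
  - assert (Hd : is_derive (fun s => shifted_gap eps M s y0) s0
                   (M * (eps * exp (M * s0)) - Derive U (y0 - s0))).
    { unfold shifted_gap. auto_derive; [repeat split; apply HU|].
      change (fun x : R => U x) with U. unfold Rminus. ring. }
    apply Rminus_le, (derive_nonpos_of_left_min _ _ _ s0 Hd); [exact Hs0|].
    intros s Hs. rewrite Htouch. left. apply Hbefore. lra.
Qed.

Lemma speed_le_of_subsolution_below (xi0 : R) : lm < V xi0 -> c <= cbar.
Proof.
  intros Hxi0. destruct (Rle_or_lt c cbar) as [|Hc]; [assumption|exfalso].
  destruct HVbdd as [Mv HMv].
  destruct (Hf (Mv + 1)) as [L [HL Hflip]].
  set (M := (L + 1) / (c - cbar)).
  assert (HM : 0 <= M) by (apply Rdiv_le_0_compat; lra).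
  destruct (is_lim_m_infty_below U lm (V xi0) xi0 HUm Hxi0) as [T [HT HTgap]].
  (* The cap 1 keeps U(y0 - s0) within 1 of V(y0), inside the Lipschitz window of f. *)
  assert (Hgap_le := Rmin_l (V xi0 - U (xi0 - T)) 1).
  assert (Hgap_le1 := Rmin_r (V xi0 - U (xi0 - T)) 1).
  set (gap := Rmin (V xi0 - U (xi0 - T)) 1) in *.
  assert (Hgap0 : 0 < gap) by (apply Rmin_glb_lt; lra).
  set (eps := gap * exp (- (M * T))).
  assert (Heps : 0 < eps) by (apply Rmult_lt_0_compat; [lra | apply exp_pos]).
  assert (HepsT : eps * exp (M * T) = gap).
  { unfold eps. rewrite Rmult_assoc, <- exp_plus, Rplus_opp_l, exp_0. ring. }
  destruct (first_touching (shifted_gap eps M) T) as [s0 [y0 [Hs0 [Htouch [Habove Hbefore]]]]].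
  - apply shifted_gap_pos_at0, Heps.
  - apply shifted_gap_pos_far; assumption.
  - apply shifted_gap_lipschitz.
  - apply shifted_gap_continuous.
  - exists T, xi0. split; [lra|]. unfold shifted_gap. lra.
  - set (xi := y0 - s0). set (E := eps * exp (M * s0)).
    assert (HE : 0 < E <= 1).
    { split; [apply Rmult_lt_0_compat; [lra | apply exp_pos]|].
      assert (exp (M * s0) <= exp (M * T)) by (apply exp_le_compat; nra).
      unfold E. nra. }
    destruct (shifted_gap_touching_slopes eps M s0 y0 ltac:(lra) Htouch Habove Hbefore)
      as [Hslopes Hsteep].
    fold xi E in Hslopes, Hsteep.
    assert (Hlattice : lattice_residual k1 k2 f cbar V y0 - lattice_residual k1 k2 f c U xi
                         <= (cbar - c) * Derive U xi + (f (V y0) - f (U xi))).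
    { assert (Hr := Habove (y0 + 1)). assert (Hl := Habove (y0 - 1)).
      unfold shifted_gap in Htouch, Hr, Hl. fold E xi in Htouch, Hr, Hl.
      replace (y0 + 1 - s0) with (xi + 1) in Hr by (unfold xi; ring).
      replace (y0 - 1 - s0) with (xi - 1) in Hl by (unfold xi; ring).
      apply (lattice_residual_touching _ _ _ _ _ _ _ _ _ E); auto; lra. }
    assert (Hnonlin : f (V y0) - f (U xi) <= L * E).
    { unfold shifted_gap in Htouch. fold E xi in Htouch.
      assert (HVy0 := HMv y0). apply Rabs_le_between in HVy0.
      assert (Hlip := Hflip (V y0) (U xi)
                        ltac:(apply Rabs_le_between; lra) ltac:(apply Rabs_le_between; lra)).
      replace (V y0 - U xi) with E in Hlip by lra.
      rewrite (Rabs_right E) in Hlip by lra. apply Rabs_le_between in Hlip. lra. }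
    assert (Hspeed : (L + 1) * E <= (c - cbar) * Derive U xi).
    { replace ((L + 1) * E) with ((c - cbar) * (M * E)) by (unfold M; field; lra).
      apply Rmult_le_compat_l; lra. }
    specialize (HVsub y0). specialize (HUsuper xi). nra.
Qed.

End SpeedComparison.

Lemma Derive_reflect (U : R -> R) (x : R) :
  ex_derive U (- x) -> Derive (reflect U) x = Derive U (- x).
Proof.
  intros Hd. apply is_derive_unique. unfold reflect.
  auto_derive; [exact Hd|]. change (fun y : R => U y) with U. ring.
Qed.

Lemma ex_derive_reflect (U : R -> R) (x : R) :
  ex_derive U (- x) -> ex_derive (reflect U) x.
Proof. intros Hd. unfold reflect. auto_derive. exact Hd. Qed.

Lemma CR1_reflect (U : R -> R) : CR1 U -> CR1 (reflect U).
Proof.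
  intros [Hd Hc]. split; [intros x; apply ex_derive_reflect, Hd|].
  intros x. apply (continuous_ext (fun y => Derive U (- y))).
  - intros y. symmetry. apply Derive_reflect, Hd.
  - apply (continuous_comp Ropp (Derive U)); [|apply Hc].
    apply (ex_derive_continuous (K := R_AbsRing) (V := R_NormedModule)). auto_derive. exact I.
Qed.

Lemma bddR_reflect (U : R -> R) : bddR U -> bddR (reflect U).
Proof.
  intros [M HM]. exists M. intros x. unfold reflect. rewrite Rabs_Ropp. apply HM.
Qed.

Lemma is_lim_reflect (U : R -> R) (x l : Rbar) :
  is_lim U x l -> is_lim (reflect U) (Rbar_opp x) (Rbar_opp l).
Proof.
  intros Hlim. unfold reflect.
  apply is_lim_opp, (is_lim_comp U Ropp (Rbar_opp x) l x); [exact Hlim| |].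
  - rewrite <- (Rbar_opp_involutive x) at 2. apply is_lim_opp, is_lim_id.
  - destruct x as [r| |]; simpl.
    + exists (mkposreal 1 Rlt_0_1). intros y _ Hy Heq. apply Hy.
      injection Heq. lra.
    + exists 0. intros y _ Heq. discriminate.
    + exists 0. intros y _ Heq. discriminate.
Qed.

Lemma lattice_residual_reflect (k1 k2 : R) (f U : R -> R) (c x : R) :
  ex_derive U (- x) ->
  lattice_residual k2 k1 (reflect f) (- c) (reflect U) x
    = - lattice_residual k1 k2 f c U (- x).
Proof.
  intros Hd. unfold lattice_residual. rewrite Derive_reflect by exact Hd.
  unfold reflect. rewrite Ropp_involutive.
  replace (- (x + 1)) with (- x - 1) by ring. replace (- (x - 1)) with (- x + 1) by ring.
  ring.
Qed.

Lemma speed_ge_of_supersolution_above (k1 k2 : R) (f U V : R -> R) (c cbar lm lp xi0 : R) :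
  0 <= k1 -> 0 <= k2 -> locally_lipschitz f ->
  CR1 U -> (forall x, ex_derive V x) -> bddR V ->
  is_lim U m_infty lm -> is_lim U p_infty lp ->
  (forall x, 0 <= lattice_residual k1 k2 f c U x) ->
  (forall x, lattice_residual k1 k2 f cbar V x <= 0) ->
  (forall x, U x <= V x) -> V xi0 < lp -> cbar <= c.
Proof.
  intros Hk1 Hk2 Hf HU HV HVbdd HUm HUp HUsub HVsuper HUV Hxi0.
  assert (HUd : forall x, ex_derive U x) by apply HU.
  cut (- c <= - cbar); [lra|].
  apply (speed_le_of_subsolution_below k2 k1 (reflect f) (reflect U) (reflect V) (- c) (- cbar)
           (- lp) (- lm) Hk2 Hk1 (locally_lipschitz_reflect f Hf) (CR1_reflect U HU)
           (fun x => ex_derive_reflect V x (HV (- x))) (bddR_reflect V HVbdd)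
           (is_lim_reflect U p_infty lp HUp) (is_lim_reflect U m_infty lm HUm))
    with (xi0 := - xi0).
  - intros x. rewrite lattice_residual_reflect by apply HUd. specialize (HUsub (- x)). lra.
  - intros x. rewrite lattice_residual_reflect by apply HV. specialize (HVsuper (- x)). lra.
  - intros x. unfold reflect. specialize (HUV (- x)). lra.
  - unfold reflect. rewrite Ropp_involutive. lra.
Qed.

Theorem corollary3p3 (k a d : R) (g : R -> R -> R) (c : R) (Phi : R -> R) :
  0 < k -> 0 < a < 1 -> 0 < d -> Hg g ->
  CR1 Phi ->
  (forall xi, - (c * Derive Phi xi) =
     d * (k * Phi (xi + 1) - (k + 1) * Phi xi + Phi (xi - 1)) + g (Phi xi) a) ->
  is_lim Phi m_infty 0 -> is_lim Phi p_infty 1 ->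
  (forall (cbar : R) (Psi : R -> R), CR1 Psi -> bddR Psi ->
     (exists xi, Psi xi > 0) ->
     (forall xi, Psi xi <= Phi xi) ->
     (forall xi, Iop g a d k cbar Psi xi <= 0) ->
     c <= cbar) /\
  (forall (cbar : R) (Psi : R -> R), CR1 Psi -> bddR Psi ->
     (exists xi, Psi xi < 1) ->
     (forall xi, Psi xi >= Phi xi) ->
     (forall xi, Iop g a d k cbar Psi xi >= 0) ->
     c >= cbar).
Proof.
  intros Hk Ha Hd [Hg_C1 _] HPhi Hwave Hm Hp.
  assert (Hdk : 0 <= d * k) by nra.
  assert (Hf : locally_lipschitz (fun u => g u a))
    by (apply locally_lipschitz_CR1_strip; [exact Hg_C1 | lra]).
  assert (Hres : forall x, lattice_residual (d * k) d (fun u => g u a) c Phi x = 0).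
  { intros x. specialize (Hwave x). unfold lattice_residual. lra. }
  assert (HIop : forall cbar Psi x,
             Iop g a d k cbar Psi x = - lattice_residual (d * k) d (fun u => g u a) cbar Psi x).
  { intros. unfold Iop, lattice_residual. ring. }
  split.
  - intros cbar Psi HPsi HPsibdd [xi0 Hxi0] Hbelow HI.
    apply (speed_le_of_subsolution_below (d * k) d (fun u => g u a) Phi Psi c cbar 0 1) with xi0;
      try assumption; try lra; [apply HPsi | intros x | intros x].
    + rewrite Hres. lra.
    + specialize (HI x). rewrite HIop in HI. lra.
  - intros cbar Psi HPsi HPsibdd [xi0 Hxi0] Habove HI. apply Rle_ge.
    apply (speed_ge_of_supersolution_above (d * k) d (fun u => g u a) Phi Psi c cbar 0 1 xi0);
      try assumption; try lra; [apply HPsi | intros x | intros x | intros x].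
    + rewrite Hres. lra.
    + specialize (HI x). rewrite HIop in HI. lra.
    + specialize (Habove x). lra.
Qed.
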